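(* Let $x_i$ be a mechanism for agent $i$ satisfying (P) and (IC), with indirect utility $U_i(s_i)=\max_{t\in[\underline s,\overline s]}U_i(t;s_i)$ on $[\underline s,\overline s]$. Then there is a function $\tilde U_i:[0,1]\to\mathbb R$ coinciding with $U_i$ on $[\underline s,\overline s]$ that is nondecreasing, convex, $2$-Lipschitz, and satisfies $0\le\tilde U_i\le\overline U_i$ on $[0,1]$.
   Context: Setup. A state $\omega\in\{-1,+1\}$ is drawn with probability $1/2$ each. There are $n\ge2$ agents. Conditional on $\omega$, signals are i.i.d. with distribution $\mathbb F_\omega$ on $[0,1]$, normalized so that $s_i=\mathbb P[\omega=+1\mid s_i]$; $\mathbb F_{-1},\mathbb F_{+1}$ mutually absolutely continuous with densities; $\mathbb F=(\mathbb F_{-1}+\mathbb F_{+1})/2$ has density supported on a non-singleton interval with endpoints $\underline s<\overline s$ in $[0,1]$. A mechanism for agent $i$ is measurable $x_i:[\underline s,\overline s]^n\to[0,1]$ (probability of receiving a good worth $\omega$, else payoff $0$). (P): $\mathbb E[\omega x_i(s_i,s_{-i})\mid s_i]\ge0$; (IC): $\mathbb E[\omega x_i(s_i,s_{-i})\mid s_i]\ge\mathbb E[\omega x_i(\hat s_i,s_{-i})\mid s_i]$, for all $s_i,\hat s_i$ in the support. For a report $t$ and a belief $s\in[0,1]$, $U_i(t;s)=s\,\mathbb E[x_i(t,s_{-i})\mid\omega=+1]-(1-s)\,\mathbb E[x_i(t,s_{-i})\mid\omega=-1]$ (equal to $\mathbb E[\omega x_i(t,s_{-i})\mid s_i=s]$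 for $s$ in the support). The first-best payoff is, for $s\in[0,1]$, $\overline U_i(s)=s\,\mathbb P[e(s,s_{-i})\mid\omega=+1]-(1-s)\,\mathbb P[e(s,s_{-i})\mid\omega=-1]$ where $e(s,s_{-i})$ is the event $s\prod_{k\ne i}s_k\ge(1-s)\prod_{k\ne i}(1-s_k)$ (i.e., $\mathrm{LR}(s,s_{-i})\ge1$); it is the interim payoff under the efficient allocation. *)

From HB Require Import structures.
From mathcomp Require Import all_boot all_order all_algebra.
From mathcomp Require Import all_classical all_reals all_analysis.
Set Implicit Arguments. Unset Strict Implicit. Unset Printing Implicit Defensive.
Import Order.TTheory GRing.Theory Num.Theory.
Local Open Scope classical_set_scope.
Local Open Scope ring_scope.

Section Defs.
Context {R : realType}.

(* For a nonnegative measurable g this is (Tonelli) the expectation of g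
   under the m-fold product of the distribution with density w. *)
Fixpoint iint (lo hi : R) (w : R -> R) (m : nat) :
    (m.-tuple R -> R) -> \bar R :=
  match m return (m.-tuple R -> R) -> \bar R with
  | 0 => fun g => (g [tuple])%:E
  | m'.+1 => fun g =>
      (\int[lebesgue_measure]_(y in `[lo, hi])
          ((w y)%:E * iint lo hi w (fun z : m'.-tuple R => g [tuple of y :: z])))%E
  end.

(* The profile (t, s_{-i}): agent i reports t, the others' signals are
   listed (in increasing order of agent index) in z. *)
Definition ins (n : nat) (i : 'I_n) (t : R) (z : n.-1.-tuple R) : n.-tuple R :=
  [tuple (if (j < i)%N then nth 0 z j else if j == i :> nat then t
          else nth 0 z j.-1) | j < n].

(* E[ g(s_{-i}) | omega ] where the other n-1 signals are i.i.d. with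
   density w (= density of F_omega), supported in [lo,hi]. *)
Definition condE (lo hi : R) (w : R -> R) (n : nat) (g : n.-1.-tuple R -> R) : R :=
  fine (iint lo hi w g).

Definition Uint (lo hi : R) (fp fm : R -> R) (n : nat) (x : n.-tuple R -> R)
    (i : 'I_n) (t s : R) : R :=
  s * condE lo hi fp (fun z => x (ins i t z))
  - (1 - s) * condE lo hi fm (fun z => x (ins i t z)).

Definition eff_event (m : nat) (s : R) (z : m.-tuple R) : R :=
  if (1 - s) * \prod_(k < m) (1 - tnth z k) <= s * \prod_(k < m) tnth z k
  then 1 else 0.

Definition Ubar (lo hi : R) (fp fm : R -> R) (n : nat) (s : R) : R :=
  s * condE lo hi fp (@eff_event n.-1 s)
  - (1 - s) * condE lo hi fm (@eff_event n.-1 s).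

Definition Lint (A : set R) (f : R -> R) : \bar R :=
  (\int[lebesgue_measure]_(y in A) (f y)%:E)%E.

Definition box (lo hi : R) (n : nat) : set (n.-tuple R) :=
  [set v | forall j : 'I_n, lo <= tnth v j <= hi].

End Defs.
Arguments box {R} lo hi n _.
Arguments Ubar {R} lo hi fp fm n s.

From HB Require Import structures.
From mathcomp Require Import all_boot all_order all_algebra.
From mathcomp Require Import all_classical all_reals all_analysis.
From mathcomp Require Import lra ring zify.
From mathcomp Require Import measurable_realfun.
Set Implicit Arguments. Unset Strict Implicit. Unset Printing Implicit Defensive.
Import Order.TTheory GRing.Theory Num.Theory.
Local Open Scope classical_set_scope.
Local Open Scope ring_scope.

(* For each report [t], the truncated interim payoff [max(0, U_i(t; s))] is the
   positive part of an affine function of the belief [s] with slope in [0, 2],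
   hence nondecreasing, convex and 2-Lipschitz on all of [0, 1]. The upper
   envelope of these functions over the reports keeps the three properties, and
   by (P) it coincides with [U_i] on the support. It stays below the first-best
   payoff because, for all weights [a, b >= 0], the likelihood-ratio event
   [a prod s_k >= b prod (1 - s_k)] maximises [a E[g | +1] - b E[g | -1]] over
   [0,1]-valued [g]: integrating out one signal [y], the normalisation
   [f_{+1}(y) (1 - y) = y f_{-1}(y)] reduces the claim to the same claim with
   weights [a y] and [b (1 - y)] and one signal fewer. *)

Section ge0_integral_nonmeasurable.
Context d (T : measurableType d) (R : realType) (mu : {measure set T -> \bar R}).
Local Open Scope ereal_scope.
Import HBNNSimple.

Lemma ge0_le_integral_nonmeas (D : set T) (f g : T -> \bar R) :
  (forall x, D x -> 0 <= f x) -> (forall x, D x -> f x <= g x) ->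
  \int[mu]_(x in D) f x <= \int[mu]_(x in D) g x.
Proof.
move=> f0 fg.
have g0 x : D x -> 0 <= g x by move=> Dx; exact: le_trans (f0 _ Dx) (fg _ Dx).
rewrite (ge0_integralE _ f0) (ge0_integralE _ g0) /=.
apply: le_ereal_sup => _ [h /= hf <-]; exists h => //= x.
apply: le_trans (hf x) _; rewrite /patch; case: ifP => //; rewrite inE => Dx.
exact: fg.
Qed.

Lemma ge0_subset_integral_nonmeas (D E : set T) (f : T -> \bar R) :
  D `<=` E -> (forall x, E x -> 0 <= f x) ->
  \int[mu]_(x in D) f x <= \int[mu]_(x in E) f x.
Proof.
move=> DE f0; rewrite [leLHS]integral_mkcond [leRHS]integral_mkcond.
apply: ge0_le_integral_nonmeas => x _; rewrite /patch.
  by case: ifP => // /set_mem /DE; exact: f0.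
case: ifP => [/set_mem /DE Ex|_]; first by rewrite mem_set.
by case: ifP => // /set_mem; exact: f0.
Qed.

Lemma ge0_integralZl_nonmeas (D : set T) (k : R) (f : T -> \bar R) :
  (0 <= k)%R -> (forall x, D x -> 0 <= f x) ->
  \int[mu]_(x in D) (k%:E * f x) = k%:E * \int[mu]_(x in D) f x.
Proof.
move=> k0 f0; have [->|kpos] := eqVneq k 0%R.
  by under eq_integral do rewrite mul0e; rewrite integral0 mul0e.
have {kpos}kpos : (0 < k)%R by rewrite lt_def kpos.
have kf0 x : D x -> 0 <= k%:E * f x by move=> Dx; rewrite mule_ge0 // f0.
rewrite (ge0_integralE _ kf0) (ge0_integralE _ f0) /= erestrict_scale.
apply/eqP; rewrite eq_le; apply/andP; split.
- apply: ge_ereal_sup => _ [h /= hf <-].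
  have ki0 : (0 <= k^-1)%R by rewrite invr_ge0 ltW.
  pose h' := scale_nnsfun h ki0.
  have -> : sintegral mu h = k%:E * sintegral mu h'.
    rewrite -sintegralrM; apply: eq_sintegral => x /=.
    by rewrite mulrA mulfV ?mul1r // gt_eqF.
  rewrite lee_pmul2l //; apply: ereal_sup_ubound; exists h' => //= x.
  by rewrite EFinM lee_pdivrMl.
- rewrite -lee_pdivlMl //; apply: ge_ereal_sup => _ [h /= hf <-].
  rewrite lee_pdivlMl //.
  pose h' := scale_nnsfun h (ltW kpos).
  rewrite -sintegralrM; apply: ereal_sup_ubound; exists h' => //= x.
  by rewrite EFinM lee_pmul2l ?lte_fin.
Qed.

Lemma ae_dom_subset (A B : set T) (P : T -> Prop) :
  B `<=` A -> {ae mu, forall x, A x -> P x} -> {ae mu, forall x, B x -> P x}.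
Proof. by move=> BA; apply: filterS => x PA /BA. Qed.

Section integralD_exchange.
Variables (D : set T) (mD : measurable D) (F1 G1 F2 G2 : T -> R).
Hypotheses (F10 : forall x, D x -> (0 <= F1 x)%R) (G10 : forall x, D x -> (0 <= G1 x)%R).
Hypotheses (F20 : forall x, D x -> (0 <= F2 x)%R) (G20 : forall x, D x -> (0 <= G2 x)%R).
Hypotheses (mF2 : measurable_fun D F2) (mG2 : measurable_fun D G2).
Hypothesis G2fin : \int[mu]_(x in D) (G2 x)%:E \is a fin_num.
Hypothesis FG : {ae mu, forall x, D x -> (F1 x + G2 x <= F2 x + G1 x)%R}.

(* [F1] and [G1] need not be measurable: [F1] is approached from below by
   simple functions [h], and [max 0 (h + G2 - F2)] is a measurable minorant
   of [G1] off a null set. *)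
Let le_integralD_minorant (h : T -> R) : measurable_fun D h ->
  (forall x, D x -> 0 <= h x <= F1 x)%R ->
  \int[mu]_(x in D) (h x)%:E + \int[mu]_(x in D) (G2 x)%:E <=
  \int[mu]_(x in D) (F2 x)%:E + \int[mu]_(x in D) (G1 x)%:E.
Proof.
move=> mh hF1; have [N [mN muN FGN]] := FG.
have {}FGN x : D x -> ~ N x -> (F1 x + G2 x <= F2 x + G1 x)%R.
  by move=> Dx Nx; apply: contra_notP Nx => nle; apply: FGN => /(_ Dx).
have mDN : measurable (D `\` N) by exact: measurableD.
have mES (f : T -> R) : measurable_fun D f -> measurable_fun (D `\` N) (EFin \o f).
  by move=> mf; apply/measurable_EFinP; apply: measurable_funS mf => // x [].
have offN (f : T -> R) : (forall x, D x -> 0 <= f x)%R -> measurable_fun D f ->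
    \int[mu]_(x in D) (f x)%:E = \int[mu]_(x in D `\` N) (f x)%:E.
  by move=> f0 mf; apply: ge0_negligible_integral => //; exact/measurable_EFinP.
pose phi x := Num.max 0%R (h x + G2 x - F2 x)%R.
have mphi : measurable_fun D phi.
  apply: measurable_maxr; first exact: measurable_cst.
  by apply: measurable_funB => //; apply: measurable_funD.
have h0 x : D x -> (0 <= h x)%R by move=> /hF1 /andP[].
rewrite (offN h) // (offN G2) // [X in _ <= X + _](offN F2) //.
rewrite -ge0_integralD //; last 4 first.
- by move=> x [/h0 ? _]; rewrite lee_fin.
- exact: mES.
- by move=> x [/G20 ? _]; rewrite lee_fin.
- exact: mES.
apply: (@le_trans _ _ (\int[mu]_(x in D `\` N) ((F2 x)%:E + (phi x)%:E))).
  apply: ge0_le_integral => //.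
  - by move=> x [Dx _]; rewrite adde_ge0 ?lee_fin ?G20 ?h0.
  - by apply: emeasurable_funD; apply: mES.
  - by apply: emeasurable_funD; apply: mES.
  by move=> x [Dx _]; rewrite -!EFinD lee_fin -lerBlDl le_max lexx orbT.
rewrite ge0_integralD //; last 4 first.
- by move=> x [/F20 ? _]; rewrite lee_fin.
- exact: mES.
- by move=> x _; rewrite lee_fin le_max lexx.
- exact: mES.
apply: leeD => //; apply: (@le_trans _ _ (\int[mu]_(x in D `\` N) (G1 x)%:E)).
  apply: ge0_le_integral_nonmeas => x [Dx Nx]; first by rewrite lee_fin le_max lexx.
  rewrite lee_fin ge_max G10 //=.
  have := FGN x Dx Nx; have /andP[_] := hF1 x Dx; lra.
by apply: ge0_subset_integral_nonmeas => [x []|x Dx] //; rewrite lee_fin G10.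
Qed.

Lemma ge0_integralD_le_ae :
  \int[mu]_(x in D) (F1 x)%:E + \int[mu]_(x in D) (G2 x)%:E <=
  \int[mu]_(x in D) (F2 x)%:E + \int[mu]_(x in D) (G1 x)%:E.
Proof.
have F10' x : D x -> 0 <= (F1 x)%:E by move=> Dx; rewrite lee_fin F10.
rewrite (ge0_integralE _ F10') /= -leeBrDr //.
apply: ge_ereal_sup => _ [h /= hF <-]; rewrite leeBrDr //.
have hD x : ~ D x -> h x = 0%R.
  move=> Dx; apply/eqP; rewrite eq_le fun_ge0 andbT.
  by have := hF x; rewrite /patch ifF ?lee_fin //; apply/negbTE/negP => /set_mem.
have -> : sintegral mu h = \int[mu]_(x in D) (h x)%:E.
  rewrite integral_nnsfun //; apply: eq_sintegral => x /=; rewrite /patch.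
  by case: ifP => // /negbT; rewrite notin_setE => /hD ->.
apply: le_integralD_minorant; first exact: measurable_funP.
move=> x Dx; rewrite fun_ge0 /=.
by have := hF x; rewrite /patch mem_set // lee_fin.
Qed.

End integralD_exchange.
End ge0_integral_nonmeasurable.

Section box.
Context (R : realType) (lo hi : R).

Lemma box_nil (z : 0.-tuple R) : box lo hi 0 z.
Proof. by case. Qed.

Lemma box_cons m y (z : m.-tuple R) :
  box lo hi m.+1 [tuple of y :: z] <-> lo <= y <= hi /\ box lo hi m z.
Proof.
split=> [bz|[ly bz] j].
  by split=> [|j]; [have := bz ord0|have := bz (lift ord0 j)]; rewrite ?tnth0 ?tnthS.
by case: (unliftP ord0 j) => [j'|] ->; rewrite ?tnthS ?tnth0.
Qed.

Lemma box_ins n (i : 'I_n) t (z : n.-1.-tuple R) :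
  lo <= t <= hi -> box lo hi n.-1 z -> box lo hi n (ins i t z).
Proof.
move=> ht bz j; rewrite /ins tnth_mktuple.
have nth_box k : (k < n.-1)%N -> lo <= nth 0 z k <= hi.
  by move=> kn; have := bz (Ordinal kn); rewrite (tnth_nth 0).
have := ltn_ord i; have := ltn_ord j.
by case: ifP => ji *; [|case: ifP => // /eqP ?]; apply: nth_box; lia.
Qed.

End box.

Section iint.
Context (R : realType) (lo hi : R) (w : R -> R).
Hypothesis w0 : forall y, lo <= y <= hi -> 0 <= w y.
Local Notation D := (`[lo, hi]%classic : set R).
Local Notation mu := (@lebesgue_measure R).
Local Open Scope ereal_scope.

Lemma iint_ge0 m (g : m.-tuple R -> R) :
  (forall z, box lo hi m z -> (0 <= g z)%R) -> 0 <= iint lo hi w g.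
Proof.
elim: m g => [|m IH] g g0 /=; first by rewrite lee_fin; apply: g0; exact: box_nil.
apply: integral_ge0 => y; rewrite /= in_itv => Dy.
by rewrite mule_ge0 ?lee_fin ?w0 // IH // => z bz; apply: g0; exact/box_cons.
Qed.

Lemma iint_le m (g1 g2 : m.-tuple R -> R) :
  (forall z, box lo hi m z -> (0 <= g1 z <= g2 z)%R) ->
  iint lo hi w g1 <= iint lo hi w g2.
Proof.
elim: m g1 g2 => [|m IH] g1 g2 g12 /=.
  by rewrite lee_fin; have /andP[] := g12 _ (box_nil lo hi [tuple]).
apply: ge0_le_integral_nonmeas => y; rewrite /= in_itv => Dy.
  rewrite mule_ge0 ?lee_fin ?w0 // iint_ge0 // => z bz.
  by have /andP[] := g12 _ (proj2 (box_cons _ _ _ _) (conj Dy bz)).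
by rewrite lee_wpmul2l ?lee_fin ?w0 // IH // => z bz; apply: g12; exact/box_cons.
Qed.

Lemma iint0 m : iint lo hi w (m:=m) (fun=> 0%R) = 0.
Proof.
elim: m => [|m IH] //=.
by under eq_integral do rewrite IH mule0; rewrite integral0.
Qed.

Hypothesis w_le1 : \int[mu]_(y in D) (w y)%:E <= 1.

Lemma iint_le1 m (g : m.-tuple R -> R) :
  (forall z, box lo hi m z -> (0 <= g z <= 1)%R) -> iint lo hi w g <= 1.
Proof.
elim: m g => [|m IH] g g01 /=.
  by rewrite lee_fin; have /andP[] := g01 _ (box_nil lo hi [tuple]).
apply: le_trans w_le1; apply: ge0_le_integral_nonmeas => y; rewrite /= in_itv => Dy.
  rewrite mule_ge0 ?lee_fin ?w0 // iint_ge0 // => z bz.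
  by have /andP[] := g01 _ (proj2 (box_cons _ _ _ _) (conj Dy bz)).
rewrite -[leRHS]mule1 lee_wpmul2l ?lee_fin ?w0 // IH // => z bz.
by apply: g01; exact/box_cons.
Qed.

Lemma iint_fin_num m (g : m.-tuple R -> R) :
  (forall z, box lo hi m z -> (0 <= g z <= 1)%R) -> iint lo hi w g \is a fin_num.
Proof.
move=> g01; have g0 z : box lo hi m z -> (0 <= g z)%R by move=> /g01 /andP[].
rewrite ge0_fin_numE; last exact: iint_ge0.
by apply: (@le_lt_trans _ _ 1); [exact: iint_le1|exact: ltry].
Qed.

Lemma fine_iint_itv m (g : m.-tuple R -> R) :
  (forall z, box lo hi m z -> (0 <= g z <= 1)%R) -> (0 <= fine (iint lo hi w g) <= 1)%R.
Proof.
move=> g01; have g0 z : box lo hi m z -> (0 <= g z)%R by move=> /g01 /andP[].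
apply/andP; split; first exact/fine_ge0/iint_ge0.
by rewrite -lee_fin fineK ?iint_fin_num //; exact: iint_le1.
Qed.

Lemma iint_consZ m (k : R) (g : m.+1.-tuple R -> R) : (0 <= k)%R ->
  (forall z, box lo hi m.+1 z -> (0 <= g z <= 1)%R) ->
  k%:E * iint lo hi w g = \int[mu]_(y in D)
    (k * w y * fine (iint lo hi w (fun z : m.-tuple R => g [tuple of y :: z])))%:E.
Proof.
move=> k0 g01; have g01y y z : (lo <= y <= hi)%R -> box lo hi m z ->
    (0 <= g [tuple of y :: z] <= 1)%R by move=> Dy bz; apply: g01; exact/box_cons.
rewrite /= -ge0_integralZl_nonmeas //; last first.
  move=> y; rewrite /= in_itv => Dy; rewrite mule_ge0 ?lee_fin ?w0 // iint_ge0 //.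
  by move=> z /(g01y _ _ Dy) /andP[].
apply: eq_integral => y; rewrite inE /= in_itv => Dy.
have fin : iint lo hi w (fun z : m.-tuple R => g [tuple of y :: z]) \is a fin_num.
  by apply: iint_fin_num => z; exact: g01y.
by rewrite -[X in _ * (_ * X)](fineK fin) -!EFinM mulrA.
Qed.

Lemma iint_consZ_integrand_ge0 m (k y : R) (g : m.+1.-tuple R -> R) : (0 <= k)%R ->
  (forall z, box lo hi m.+1 z -> (0 <= g z <= 1)%R) -> D y ->
  (0 <= k * w y * fine (iint lo hi w (fun z : m.-tuple R => g [tuple of y :: z])))%R.
Proof.
move=> k0 g01; rewrite /= in_itv => Dy; rewrite !mulr_ge0 ?w0 //.
have g01y z : box lo hi m z -> (0 <= g [tuple of y :: z] <= 1)%R.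
  by move=> bz; apply: g01; exact/box_cons.
by have /andP[] := fine_iint_itv g01y.
Qed.

End iint.

Section lr_event.
Context (R : realType).

Definition lr_event m (a b : R) (z : m.-tuple R) : R :=
  if b * \prod_(k < m) (1 - tnth z k) <= a * \prod_(k < m) tnth z k then 1 else 0.

Lemma eff_eventE m s : @eff_event R m s = lr_event s (1 - s).
Proof. by []. Qed.

Lemma lr_event_itv m a b (z : m.-tuple R) : 0 <= lr_event a b z <= 1.
Proof. by rewrite /lr_event; case: ifP; rewrite ?lexx ?ler01. Qed.

Lemma lr_event_cons m a b y (z : m.-tuple R) :
  lr_event a b [tuple of y :: z] = lr_event (a * y) (b * (1 - y)) z.
Proof.
rewrite /lr_event !big_ord_recl !tnth0.
under eq_bigr do rewrite tnthS.
under [X in _ <= _ * (_ * X)]eq_bigr do rewrite tnthS.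
by rewrite !mulrA.
Qed.

Lemma lr_event_homo m a b y1 y2 (z : m.-tuple R) : 0 <= a -> 0 <= b ->
  (forall k, 0 <= tnth z k <= 1) -> y1 <= y2 ->
  lr_event (a * y1) (b * (1 - y1)) z <= lr_event (a * y2) (b * (1 - y2)) z.
Proof.
move=> a0 b0 z01 y12; rewrite /lr_event.
set P := \prod_(k < m) (1 - tnth z k); set Q := \prod_(k < m) tnth z k.
have P0 : 0 <= P by apply: prodr_ge0 => k _; have := z01 k; lra.
have Q0 : 0 <= Q by apply: prodr_ge0 => k _; have /andP[] := z01 k.
case: ifP => [le1|_]; last by case: ifP; rewrite ?lexx ?ler01.
rewrite ifT // (le_trans _ (le_trans le1 _)) //.
  by rewrite ler_wpM2r // ler_wpM2l // lerB.
by rewrite ler_wpM2r // ler_wpM2l.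
Qed.

End lr_event.

Lemma box_unit (R : realType) (lo hi : R) m (z : m.-tuple R) :
  0 <= lo -> hi <= 1 -> box lo hi m z -> forall k, 0 <= tnth z k <= 1.
Proof.
move=> lo0 hi1 bz k; have /andP[lz zh] := bz k.
by rewrite (le_trans lo0 lz) (le_trans zh hi1).
Qed.

(* The posterior normalization [p (1 - y) = y q] says [p = y (p + q)] and
   [q = (1 - y) (p + q)]. *)
Lemma ler_posterior_reweight (R : realType) (p q y a b u v u' v' : R) :
  p * (1 - y) = y * q -> 0 <= p + q ->
  a * y * u + b * (1 - y) * v' <= a * y * u' + b * (1 - y) * v ->
  a * p * u + b * q * v' <= a * p * u' + b * q * v.
Proof.
move=> norm pq0 le_y.
have Sp : p = y * (p + q) by rewrite mulrDr -norm; ring.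
have Sq : q = (1 - y) * (p + q) by rewrite mulrDr [(1 - y) * p]mulrC norm; ring.
move: (p + q) pq0 Sp Sq => S S0 -> ->; nra.
Qed.

Section lr_event_optimal.
Context (R : realType) (lo hi : R) (lo0 : 0 <= lo) (hi1 : hi <= 1).
Local Notation D := (`[lo, hi]%classic : set R).
Local Notation mu := (@lebesgue_measure R).

Lemma measurable_fine_iint_lr_event (w : R -> R) m a b :
  (forall y, lo <= y <= hi -> 0 <= w y) -> (\int[mu]_(y in D) (w y)%:E <= 1)%E ->
  0 <= a -> 0 <= b -> measurable_fun D
    (fun y => fine (iint lo hi w (fun z : m.-tuple R => lr_event a b [tuple of y :: z]))).
Proof.
move=> w0 w1 a0 b0; apply: nondecreasing_measurable => // y1 y2 y12.
have fin y : iint lo hi w (fun z : m.-tuple R => lr_event a b [tuple of y :: z]) \is a fin_num.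
  by apply: iint_fin_num => // z _; exact: lr_event_itv.
apply: fine_le; rewrite ?fin //.
apply: iint_le => // z bz; rewrite !lr_event_cons.
have /andP[-> _] := lr_event_itv (a * y1) (b * (1 - y1)) z.
exact: lr_event_homo (box_unit lo0 hi1 bz) y12.
Qed.

Context (fp fm : R -> R).
Hypotheses (fp0 : forall y, lo <= y <= hi -> 0 <= fp y)
  (fm0 : forall y, lo <= y <= hi -> 0 <= fm y).
Hypotheses (mfp : measurable_fun D fp) (mfm : measurable_fun D fm).
Hypotheses (fp1 : (\int[mu]_(y in D) (fp y)%:E <= 1)%E)
  (fm1 : (\int[mu]_(y in D) (fm y)%:E <= 1)%E).
Hypothesis norm : {ae mu, forall y, D y -> fp y * (1 - y) = y * fm y}.

Lemma lr_event_optimal m a b (g : m.-tuple R -> R) : 0 <= a -> 0 <= b ->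
  (forall z, box lo hi m z -> 0 <= g z <= 1) ->
  a * fine (iint lo hi fp g) + b * fine (iint lo hi fm (lr_event (m:=m) a b)) <=
  a * fine (iint lo hi fp (lr_event (m:=m) a b)) + b * fine (iint lo hi fm g).
Proof.
elim: m a b g => [|m IH] a b g a0 b0 g01.
  rewrite /= /lr_event !big_ord0 !mulr1.
  have /andP[g0 g1] := g01 [tuple] (box_nil _ _ _).
  by case: ifP; nra.
have lr01 m' a' b' (z : m'.-tuple R) : box lo hi m' z -> 0 <= lr_event a' b' z <= 1.
  by move=> _; exact: lr_event_itv.
have finp := iint_fin_num fp0 fp1; have finm := iint_fin_num fm0 fm1.
rewrite -lee_fin !EFinD !EFinM !fineK ?finp ?finm //; [|exact: lr01..].
rewrite (iint_consZ fp0 fp1 a0 g01) (iint_consZ fm0 fm1 b0 g01).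
rewrite (iint_consZ fp0 fp1 a0 (lr01 _ a b)) (iint_consZ fm0 fm1 b0 (lr01 _ a b)).
apply: ge0_integralD_le_ae => [|y|y|y|y||||].
- exact: measurable_itv.
- exact (iint_consZ_integrand_ge0 fp0 fp1 a0 g01).
- exact (iint_consZ_integrand_ge0 fm0 fm1 b0 g01).
- exact (iint_consZ_integrand_ge0 fp0 fp1 a0 (lr01 _ a b)).
- exact (iint_consZ_integrand_ge0 fm0 fm1 b0 (lr01 _ a b)).
- apply: measurable_funM; last exact: measurable_fine_iint_lr_event.
  by apply: measurable_funM => //; exact: measurable_cst.
- apply: measurable_funM; last exact: measurable_fine_iint_lr_event.
  by apply: measurable_funM => //; exact: measurable_cst.
- by rewrite -(iint_consZ fm0 fm1 b0 (lr01 _ a b)) fin_numM //; exact: finm (lr01 _ a b).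
(* Pointwise in the first signal [y], this is the induction hypothesis with
   weights [a y] and [b (1 - y)]. *)
near=> y => Dy; have norm_y : fp y * (1 - y) = y * fm y by exact: (near norm).
apply: ler_posterior_reweight norm_y _ _; first by rewrite addr_ge0 ?fp0 ?fm0.
have /andP[y0 y1] : 0 <= y <= 1 by rewrite (le_trans lo0) ?(le_trans _ hi1); case/andP: Dy.
have lrE : (fun z : m.-tuple R => lr_event a b [tuple of y :: z]) =
    lr_event (a * y) (b * (1 - y)) by apply/funext => z; exact: lr_event_cons.
rewrite !lrE; apply: IH; rewrite ?mulr_ge0 ?subr_ge0 // => z bz.
by apply: g01; exact/box_cons.
Unshelve. all: by end_near.
Qed.

Lemma condE_le_Ubar n s (g : n.-1.-tuple R -> R) : 0 <= s <= 1 ->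
  (forall z, box lo hi n.-1 z -> 0 <= g z <= 1) ->
  s * condE lo hi fp g - (1 - s) * condE lo hi fm g <= Ubar lo hi fp fm n s.
Proof.
move=> /andP[s0 s1] g01; have s1' : 0 <= 1 - s by rewrite subr_ge0.
have := lr_event_optimal s0 s1' g01.
by rewrite /Ubar /condE !eff_eventE; lra.
Qed.

Lemma Ubar_ge0 n s : 0 <= s <= 1 -> 0 <= Ubar lo hi fp fm n s.
Proof.
move=> s01; have := condE_le_Ubar (n := n) (g := fun=> 0) s01.
by rewrite /condE !iint0 !mulr0 subr0; apply=> _ _; rewrite lexx ler01.
Qed.

End lr_event_optimal.

Section upper_envelope.
Context (R : realType) (I : Type) (T : set I) (f : I -> R -> R).
Hypotheses (T0 : T !=set0) (f_ub : forall s, has_ubound [set f t s | t in T]).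

Definition upper_envelope s := sup [set f t s | t in T].

Let fT0 s : [set f t s | t in T] !=set0.
Proof. by have [t Tt] := T0; exists (f t s), t. Qed.

Lemma upper_envelope_ub t s : T t -> f t s <= upper_envelope s.
Proof. by move=> Tt; apply: sup_upper_bound; [split|exists t]. Qed.

Lemma upper_envelope_le s c : (forall t, T t -> f t s <= c) -> upper_envelope s <= c.
Proof. by move=> fc; apply: ge_sup => // _ [t Tt <-]; exact: fc. Qed.

Lemma upper_envelope_homo :
  (forall t, T t -> {homo f t : a b / a <= b}) -> {homo upper_envelope : a b / a <= b}.
Proof.
move=> f_homo a b ab; apply: upper_envelope_le => t Tt.
exact: le_trans (f_homo t Tt a b ab) (upper_envelope_ub _ Tt).
Qed.

Lemma upper_envelope_convex a b l : 0 <= l <= 1 ->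
  (forall t, T t -> f t (l * a + (1 - l) * b) <= l * f t a + (1 - l) * f t b) ->
  upper_envelope (l * a + (1 - l) * b) <=
    l * upper_envelope a + (1 - l) * upper_envelope b.
Proof.
move=> /andP[l0 l1] f_conv; apply: upper_envelope_le => t Tt.
apply: le_trans (f_conv t Tt) _.
by rewrite lerD // ler_wpM2l ?subr_ge0 // upper_envelope_ub.
Qed.

Lemma upper_envelope_lipschitz k :
  (forall t a b, T t -> f t a <= f t b + k * `|a - b|) ->
  forall a b, `|upper_envelope a - upper_envelope b| <= k * `|a - b|.
Proof.
move=> f_lip.
have le_ab a b : upper_envelope a <= upper_envelope b + k * `|a - b|.
  apply: upper_envelope_le => t Tt; apply: le_trans (f_lip t a b Tt) _.
  by rewrite lerD2r upper_envelope_ub.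
move=> a b; have := le_ab a b; have := le_ab b a; rewrite distrC.
by rewrite ler_norml; lra.
Qed.

End upper_envelope.

Section trunc_payoff.
Context (R : realType).

(* Interim payoff [s A - (1 - s) B] of a report winning with probability [A]
   under [+1] and [B] under [-1], floored by the payoff [0] of abstaining. *)
Definition trunc_payoff (A B s : R) := Num.max 0 (s * A - (1 - s) * B).

Lemma trunc_payoff_ge0 A B s : 0 <= trunc_payoff A B s.
Proof. by rewrite le_max lexx. Qed.

Lemma le_trunc_payoff A B s : s * A - (1 - s) * B <= trunc_payoff A B s.
Proof. by rewrite le_max lexx orbT. Qed.

Lemma trunc_payoff_homo A B : 0 <= A -> 0 <= B ->
  {homo trunc_payoff A B : a b / a <= b}.
Proof.
move=> A0 B0 a b ab; rewrite {1}/trunc_payoff ge_max trunc_payoff_ge0.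
apply: le_trans (le_trunc_payoff A B b).
have : 0 <= (b - a) * (A + B) by rewrite mulr_ge0 ?subr_ge0 ?addr_ge0.
lra.
Qed.

Lemma trunc_payoff_convex A B a b l : 0 <= l <= 1 ->
  trunc_payoff A B (l * a + (1 - l) * b) <=
    l * trunc_payoff A B a + (1 - l) * trunc_payoff A B b.
Proof.
move=> /andP[l0 l1]; rewrite {1}/trunc_payoff ge_max.
rewrite addr_ge0 ?mulr_ge0 ?trunc_payoff_ge0 ?subr_ge0 //=.
have -> : (l * a + (1 - l) * b) * A - (1 - (l * a + (1 - l) * b)) * B =
    l * (a * A - (1 - a) * B) + (1 - l) * (b * A - (1 - b) * B) by ring.
by rewrite lerD // ler_wpM2l ?subr_ge0 ?le_trunc_payoff.
Qed.

Lemma trunc_payoff_lipschitz A B a b : 0 <= A <= 1 -> 0 <= B <= 1 ->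
  trunc_payoff A B a <= trunc_payoff A B b + 2 * `|a - b|.
Proof.
move=> /andP[A0 A1] /andP[B0 B1]; rewrite {1}/trunc_payoff ge_max.
rewrite addr_ge0 ?mulr_ge0 ?trunc_payoff_ge0 //=.
have := le_trunc_payoff A B b.
have : (a - b) * (A + B) <= `|a - b| * 2.
  by rewrite (le_trans (ler_wpM2r _ (ler_norm _))) ?ler_wpM2l ?addr_ge0 //; lra.
lra.
Qed.

Lemma trunc_payoff_le_norm A B s : 0 <= A <= 1 -> 0 <= B <= 1 ->
  trunc_payoff A B s <= `|s| + `|1 - s|.
Proof.
move=> /andP[A0 A1] /andP[B0 B1]; rewrite /trunc_payoff ge_max addr_ge0 //=.
have : s * A <= `|s| by rewrite (le_trans (ler_wpM2r _ (ler_norm _))) ?ler_piMr.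
have : - (1 - s) * B <= `|1 - s|.
  by rewrite -normrN (le_trans (ler_wpM2r _ (ler_norm _))) ?ler_piMr.
lra.
Qed.

End trunc_payoff.

Section payoff_envelope.
Context (R : realType) (I : Type) (T : set I) (A B : I -> R).
Hypotheses (T0 : T !=set0) (A01 : forall t, T t -> 0 <= A t <= 1)
  (B01 : forall t, T t -> 0 <= B t <= 1).

Definition payoff_envelope := upper_envelope T (fun t => trunc_payoff (A t) (B t)).

Let payoff_ub s : has_ubound [set trunc_payoff (A t) (B t) s | t in T].
Proof.
by exists (`|s| + `|1 - s|) => _ [t Tt <-]; exact: trunc_payoff_le_norm (A01 Tt) (B01 Tt).
Qed.

Lemma payoff_envelope_ub t s : T t -> trunc_payoff (A t) (B t) s <= payoff_envelope s.
Proof. exact: upper_envelope_ub T0 payoff_ub t s. Qed.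

Lemma payoff_envelope_le s c :
  (forall t, T t -> trunc_payoff (A t) (B t) s <= c) -> payoff_envelope s <= c.
Proof. exact/upper_envelope_le. Qed.

Lemma payoff_envelope_ge0 s : 0 <= payoff_envelope s.
Proof.
by have [t Tt] := T0; exact: le_trans (trunc_payoff_ge0 _ _ _) (payoff_envelope_ub _ Tt).
Qed.

Lemma payoff_envelope_homo : {homo payoff_envelope : a b / a <= b}.
Proof.
apply: (upper_envelope_homo T0 payoff_ub) => t Tt.
by have [/andP[A0 _] /andP[B0 _]] := (A01 Tt, B01 Tt); exact: trunc_payoff_homo.
Qed.

Lemma payoff_envelope_convex a b l : 0 <= l <= 1 ->
  payoff_envelope (l * a + (1 - l) * b) <=
    l * payoff_envelope a + (1 - l) * payoff_envelope b.
Proof.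
move=> l01; apply: (upper_envelope_convex T0 payoff_ub) => // t _.
exact: trunc_payoff_convex l01.
Qed.

Lemma payoff_envelope_lipschitz a b :
  `|payoff_envelope a - payoff_envelope b| <= 2 * `|a - b|.
Proof.
apply: (upper_envelope_lipschitz T0 payoff_ub) => t a' b' Tt.
exact: trunc_payoff_lipschitz (A01 Tt) (B01 Tt).
Qed.

End payoff_envelope.

Lemma density_restrict (R : realType) (lo hi : R) (w : R -> R) :
  0 <= lo -> hi <= 1 -> measurable_fun `[0 : R, 1] w ->
  (forall s, 0 <= s <= 1 -> 0 <= w s) -> Lint `[0 : R, 1] w = 1%E ->
  [/\ forall s, lo <= s <= hi -> 0 <= w s, measurable_fun `[lo, hi] w &
      (\int[lebesgue_measure]_(s in `[lo, hi]) (w s)%:E <= 1)%E].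
Proof.
move=> lo0 hi1 mw w0 w1.
have sub : `[lo, hi] `<=` `[0 : R, 1].
  by move=> s /=; rewrite !in_itv /= => /andP[ls sh]; rewrite (le_trans lo0) ?(le_trans sh).
have w0' s : lo <= s <= hi -> 0 <= w s by move=> hs; apply: w0; have := sub s; rewrite /= !in_itv; apply.
split=> //; first exact: measurable_funS mw.
rewrite -w1; apply: ge0_subset_integral => //; first exact/measurable_EFinP.
Qed.

Theorem lemmaA2 (R : realType) (n : nat) (hn : (2 <= n)%N)
  (fp fm : R -> R) (lo hi : R)
  (* F_{+1}, F_{-1}: distributions on [0,1] with densities fp, fm *)
  (mfp : measurable_fun `[0 : R, 1] fp) (mfm : measurable_fun `[0 : R, 1] fm)
  (fp_ge0 : forall s : R, 0 <= s <= 1 -> 0 <= fp s)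
  (fm_ge0 : forall s : R, 0 <= s <= 1 -> 0 <= fm s)
  (fp_int1 : Lint `[0 : R, 1] fp = 1%E)
  (fm_int1 : Lint `[0 : R, 1] fm = 1%E)
  (* mutual absolute continuity *)
  (hac : {ae lebesgue_measure, forall s : R, 0 <= s <= 1 -> (fp s = 0 <-> fm s = 0)})
  (* normalization s = P[omega = +1 | s] = fp s / (fp s + fm s) *)
  (hnorm : {ae lebesgue_measure, forall s : R, 0 <= s <= 1 -> fp s * (1 - s) = s * fm s})
  (* the density of F = (F_{-1}+F_{+1})/2 has support [lo,hi] *)
  (hlohi : 0 <= lo) (hlohi' : lo < hi) (hhi : hi <= 1)
  (hsupp_out : {ae lebesgue_measure, forall s : R, 0 <= s <= 1 ->
                 ~ (lo <= s <= hi) -> (fp s + fm s) / 2 = 0})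
  (hsupp_in : forall a b : R, lo <= a -> a < b -> b <= hi ->
     (0%E < Lint `]a, b[ (fun y => ((fp y + fm y) / 2)%R))%E)
  (* the mechanism x_i for agent i *)
  (i : 'I_n) (x : n.-tuple R -> R)
  (mx : measurable_fun (box lo hi n) x)
  (x01 : forall v : n.-tuple R, box lo hi n v -> 0 <= x v <= 1)
  (* (P) *)
  (hP : forall s : R, lo <= s <= hi -> 0 <= Uint lo hi fp fm x i s s)
  (* (IC) *)
  (hIC : forall s t : R, lo <= s <= hi -> lo <= t <= hi ->
     Uint lo hi fp fm x i t s <= Uint lo hi fp fm x i s s)
  (* indirect utility U_i(s) = max_{t in [lo,hi]} U_i(t; s) *)
  (U : R -> R)
  (hU : forall s : R, lo <= s <= hi ->
     (exists2 t, lo <= t <= hi & U s = Uint lo hi fp fm x i t s) /\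
     (forall t : R, lo <= t <= hi -> Uint lo hi fp fm x i t s <= U s)) :
  exists Ut : R -> R,
    (forall s : R, lo <= s <= hi -> Ut s = U s) /\
    (forall a b : R, 0 <= a -> a <= b -> b <= 1 -> Ut a <= Ut b) /\
    (forall a b l : R, 0 <= a <= 1 -> 0 <= b <= 1 -> 0 <= l <= 1 ->
       Ut (l * a + (1 - l) * b) <= l * Ut a + (1 - l) * Ut b) /\
    (forall a b : R, 0 <= a <= 1 -> 0 <= b <= 1 -> `|Ut a - Ut b| <= 2 * `|a - b|) /\
    (forall s : R, 0 <= s <= 1 -> 0 <= Ut s <= Ubar lo hi fp fm n s).
Proof.
have [fp0 mfpD fp1] := density_restrict hlohi hhi mfp fp_ge0 fp_int1.
have [fm0 mfmD fm1] := density_restrict hlohi hhi mfm fm_ge0 fm_int1.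
have norm : {ae lebesgue_measure, forall s : R, `[lo, hi]%classic s -> fp s * (1 - s) = s * fm s}.
  apply: ae_dom_subset hnorm => s /=; rewrite in_itv => /andP[ls sh].
  by rewrite (le_trans hlohi) ?(le_trans sh).
have x01i t : lo <= t <= hi -> forall z, box lo hi n.-1 z -> 0 <= x (ins i t z) <= 1.
  by move=> ht z bz; apply: x01; exact: box_ins.
pose T := [set t : R | lo <= t <= hi].
pose A t := condE lo hi fp (fun z : n.-1.-tuple R => x (ins i t z)).
pose B t := condE lo hi fm (fun z : n.-1.-tuple R => x (ins i t z)).
have T0 : T !=set0 by exists lo; rewrite /T /= lexx ltW.
have A01 t (ht : T t) : 0 <= A t <= 1 := fine_iint_itv fp0 fp1 (x01i t ht).
have B01 t (ht : T t) : 0 <= B t <= 1 := fine_iint_itv fm0 fm1 (x01i t ht).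
exists (payoff_envelope T A B); split; [|split; [|split; [|split]]].
- move=> s hs; have [[t ht Ut] Umax] := hU s hs; apply/le_anti/andP; split.
    apply: (payoff_envelope_le T0) => t' ht'; rewrite /trunc_payoff ge_max.
    by rewrite (le_trans (hP s hs) (Umax s hs)); exact: Umax.
  rewrite Ut; apply: le_trans (payoff_envelope_ub T0 A01 B01 s ht).
  exact: le_trunc_payoff.
- by move=> a b _ ab _; exact: payoff_envelope_homo T0 A01 B01 _ _ ab.
- by move=> a b l _ _; exact: payoff_envelope_convex T0 A01 B01 a b l.
- by move=> a b _ _; exact: payoff_envelope_lipschitz T0 A01 B01 a b.
move=> s s01; rewrite (payoff_envelope_ge0 T0 A01 B01) /=.
apply: (payoff_envelope_le T0) => t ht; rewrite /trunc_payoff ge_max.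
rewrite (Ubar_ge0 hlohi hhi fp0 fm0 mfpD mfmD fp1 fm1 norm) //=.
apply: (condE_le_Ubar hlohi hhi fp0 fm0 mfpD mfmD fp1 fm1 norm) => //; exact: x01i.
Qed.
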